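(* Let $\Delta\subset\mathbb{Z}^2\setminus\{(0,0)\}$ be a finite multiset which is balanced, non-degenerate and even, with associated polygon $P_\Delta$, sides $\sigma\in P^1_\Delta$, numbers $n^\sigma$ and $k^\sigma_i$ as in the context. Then the set of sequences $\boldsymbol z=(z^\sigma_i)_{\sigma\in P^1_\Delta,\,1\le i\le n^\sigma}$, $z^\sigma_i\in\operatorname{Tor}(\sigma)^\times$, satisfying the Menelaus $\Delta$-condition forms an algebraic hypersurface $\operatorname{Men}(\Delta)\subset\prod_{\sigma\in P^1_\Delta}\operatorname{Tor}(\sigma)^{n^\sigma}$.
   Context: A multiset $\Delta\subset\mathbb{Z}^2\setminus\{(0,0)\}$ is balanced if its elements sum to $0$, non-degenerate if its elements span $\mathbb{R}^2$, and even if $\Delta\subset(2\mathbb{Z})^2$. Rotating each $\boldsymbol a\in\Delta$ counterclockwise by $\pi/2$ and concatenating the resulting vectors gives the counterclockwise oriented boundary of a convex lattice polygon $P_\Delta$ (defined up to translation). $P^1_\Delta$ denotes the set of sides of $P_\Delta$; for $\sigma\in P^1_\Delta$, let $\boldsymbol a^\sigma_1,\dots,\boldsymbol a^\sigma_{n^\sigma}$ be the elements of $\Delta$ that are outer normals to $\sigma$, and let $2k^\sigma_i$ be the lattice length of $\boldsymbol a^\sigma_i$ (its Euclidean length divided by the length of a primitive parallel integral vector). $\operatorname{Tor}(P_\Delta)$ is the complex toric surface of $P_\Delta$, $\operatorname{Tor}(\sigma)$ the toric divisor corresponding to $\sigma$, $\operatorname{Tor}(\sigma)^\times\cong\mathbb{C}^\times$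 its dense orbit, and $\mathcal{L}_{P_\Delta}$ the tautological line bundle (its global sections are spanned by the monomials $z^\omega$, $\omega\in P_\Delta\cap\mathbb{Z}^2$). A sequence $\boldsymbol z=(z^\sigma_i)$ with $z^\sigma_i\in\operatorname{Tor}(\sigma)^\times$ satisfies the Menelaus $\Delta$-condition if there is a curve $C\in|\mathcal{L}_{P_\Delta}|$ containing no toric divisor as a component such that, for each $\sigma\in P^1_\Delta$, the scheme-theoretic intersection of $C$ and $\operatorname{Tor}(\sigma)$ equals $\sum_{i=1}^{n^\sigma}2k^\sigma_i z^\sigma_i$. *)

From HB Require Import structures.
From mathcomp Require Import all_boot all_order all_algebra.
From mathcomp Require Import reals complex.
From mathcomp Require Import mpoly.
Set Implicit Arguments. Unset Strict Implicit. Unset Printing Implicit Defensive.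
Import Order.TTheory GRing.Theory Num.Theory.
Local Open Scope ring_scope.

Definition vec := (int * int)%type.
Definition vadd (u v : vec) : vec := (u.1 + v.1, u.2 + v.2).
Definition vscale (j : int) (u : vec) : vec := (j * u.1, j * u.2).
Definition dot (u v : vec) : int := u.1 * v.1 + u.2 * v.2.
Definition cross (u v : vec) : int := u.1 * v.2 - u.2 * v.1.
Definition rot (a : vec) : vec := (- a.2, a.1).

Definition Delta_nonzero_vecs (D : seq vec) : bool := all (fun a => a != (0, 0)) D.
Definition Delta_balanced (D : seq vec) : Prop :=
  \sum_(a <- D) a.1 = 0 /\ \sum_(a <- D) a.2 = 0.
Definition Delta_nondegenerate (D : seq vec) : Prop :=
  exists2 a, a \in D & exists2 b, b \in D & cross a b != 0.
Definition Delta_even_vecs (D : seq vec) : Prop :=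
  forall a, a \in D -> (2 %| a.1)%Z /\ (2 %| a.2)%Z.

(* lattice length of a nonzero integer vector (= 2 k for even vectors) *)
Definition latlen (a : vec) : nat := gcdn `|a.1|%N `|a.2|%N.
Definition prim_edge (a : vec) : vec :=
  ((rot a).1 %/ (latlen a)%:Z, (rot a).2 %/ (latlen a)%:Z)%Z.

(* a and b are positively parallel (outer normals to the same side) *)
Definition same_dir (a b : vec) : bool := (cross a b == 0) && (0 < dot a b).

(* angular order on nonzero vectors: argument in [0, 2 pi) *)
Definition half (v : vec) : nat := if (0 < v.2) || ((v.2 == 0) && (0 < v.1)) then 0%N else 1%N.
Definition ang_lt (u v : vec) : bool :=
  (half u < half v)%N || ((half u == half v) && (0 < cross u v)).

(* P_Delta (a fixed translate): edges rot b concatenated in counterclockwise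
   order of argument, starting at the origin.  vstart D a is the initial
   vertex of the side with outer normal direction a. *)
Definition vstart (D : seq vec) (a : vec) : vec :=
  foldr vadd (0, 0) [seq rot b | b <- D & ang_lt (rot b) (rot a)].
Definition in_poly (D : seq vec) (w : vec) : bool :=
  all (fun b => dot w b <= dot (vstart D b) b) D.
Definition side_len (D : seq vec) (a : vec) : nat :=
  \sum_(b <- D | same_dir a b) latlen b.
Definition side_pt (D : seq vec) (a : vec) (j : nat) : vec :=
  vadd (vstart D a) (vscale j%:Z (prim_edge a)).

Section Menelaus.
Variable R : realType.
Local Notation C := (R[i]).

(* Restriction of f = sum_w c_w z^w to the orbit Tor(sigma)^x, written in the
   coordinate t = z^(prim_edge a) on Tor(sigma)^x ~ C^x. *)
Definition side_poly (D : seq vec) (c : vec -> C) (a : vec) : {poly C} :=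
  \sum_(j < (side_len D a).+1) c (side_pt D a j) *: 'X^j.

(* Menelaus Delta-condition for z (z_i attached to the i-th element of D) *)
Definition menelaus (D : seq vec) (z : 'I_(size D) -> C) : Prop :=
  exists c : vec -> C,
    (* C is a curve in |L_P|: a nonzero section *)
    (exists2 w, in_poly D w & c w != 0) /\
    (* for every side sigma (indexed by any a in D normal to it):
       no toric divisor is a component and
       C . Tor(sigma) = sum_{b in sigma} 2 k_b z_b *)
    forall i : 'I_(size D),
      side_poly D c (nth (0,0) D i) != 0 /\
      exists2 lam : C, lam != 0 &
        side_poly D c (nth (0,0) D i) =
        lam *: \prod_(l < size D | same_dir (nth (0,0) D i) (nth (0,0) D l))
                 ('X - (z l)%:P) ^+ latlen (nth (0,0) D l).

(* units of the Laurent polynomial ring C[x_1^{+-1},...,x_n^{+-1}]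
   (polynomials being multiplied by monomials) *)
Definition torus_unit (n : nat) (F : mpoly.mpoly n C) : Prop :=
  exists (lam : C) (m : mpoly.multinom n), F = lam *: mpoly.mpolyX C m.

(* S is an algebraic hypersurface of the torus (C^x)^n: the zero locus in the
   torus of a single nonzero non-unit (Laurent) polynomial. *)
Definition torus_hypersurface (n : nat) (S : ('I_n -> C) -> Prop) : Prop :=
  exists F : mpoly.mpoly n C, F != 0 /\ ~ torus_unit F /\
    forall z : 'I_n -> C, (forall i, z i != 0) ->
      (S z <-> mpoly.meval z F = 0).

End Menelaus.
Arguments menelaus {R} D z.
Arguments torus_hypersurface {R} n S.
Arguments side_poly {R} D c a.

From HB Require Import structures.
From mathcomp Require Import all_boot all_order all_algebra.
From mathcomp Require Import reals complex mpoly.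
From mathcomp Require Import zify ring lra.
(* Imported last, so that [Defs.rot] and [Defs.half] shadow [seq.rot] and [ssrnat.half]. *)
From Pilot Require Import Defs.
Set Implicit Arguments. Unset Strict Implicit. Unset Printing Implicit Defensive.
Import Order.TTheory GRing.Theory Num.Theory.
Local Open Scope ring_scope.

(* Walk counterclockwise around the boundary of [P_Delta]: every [a] in [Delta]
   contributes [latlen a] primitive steps, the steps are sorted by argument, and
   their partial sums enumerate the boundary lattice points, which are pairwise
   distinct by convexity.  On each side the Menelaus condition forces the coefficient
   of the curve at the first vertex of the side to be its coefficient at the last
   vertex times the product of the [-z_b] over the side.  Going once around, such a
   curve exists iff the product of all these factors is 1, i.e. iff
   [prod_a z_a ^ latlen a = (-1) ^ (sum_a latlen a)]; conversely, when this holds the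
   coefficients can be prescribed consistently along the boundary (and set to 0
   inside).  Hence [Men(Delta)] is the zero set of a binomial. *)

Ltac split_signs :=
  rewrite /ang_lt /same_dir /half /cross /dot /= ?xpair_eqE;
  repeat match goal with
  | |- context [(0 < ?y) || ((?y == 0) && (0 < ?x))] =>
      case: (ltrP 0 y) => ? /=; [| case: (eqVneq y 0) => ? /=]; case: (ltrP 0 x) => ? /=
  end; try lia; nia.

Lemma ang_lt_irr (u : vec) : ~~ ang_lt u u.
Proof. rewrite /ang_lt /cross ltnn eqxx /=; apply/negP; lia. Qed.

Lemma ang_lt_trans (u v w : vec) : ang_lt u v -> ang_lt v w -> ang_lt u w.
Proof. case: u => u1 u2; case: v => v1 v2; case: w => w1 w2; split_signs. Qed.

Lemma ang_lt_cotrans (u v w : vec) : u != (0, 0) -> v != (0, 0) -> w != (0, 0) ->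
  ang_lt u w -> ang_lt u v || ang_lt v w.
Proof. case: u => u1 u2; case: v => v1 v2; case: w => w1 w2; split_signs. Qed.

Lemma ang_eqv_same_dir (u v : vec) : u != (0, 0) -> v != (0, 0) ->
  ~~ ang_lt u v && ~~ ang_lt v u = same_dir u v.
Proof. case: u => u1 u2; case: v => v1 v2; split_signs. Qed.

Lemma cross_gt0_ang_lt_upper (u f : vec) :
  half f = 0%N -> ang_lt u f -> 0 < cross u f.
Proof. case: u => u1 u2; case: f => f1 f2; split_signs. Qed.

Lemma cross_lt0_ang_gt_lower (u f : vec) :
  half f != 0%N -> ang_lt f u -> cross u f < 0.
Proof. case: u => u1 u2; case: f => f1 f2; split_signs. Qed.

(* For [f] in the upper half plane and [u] past [f], [0 < cross u f] says that [u]
   lies beyond [-f]; this persists as we keep turning counterclockwise. *)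
Lemma cross_gt0_ang_mono (f u v : vec) : f != (0, 0) -> u != (0, 0) -> v != (0, 0) ->
  half f = 0%N -> ang_lt f u -> ~~ ang_lt v u -> 0 < cross u f -> 0 < cross v f.
Proof. case: f => f1 f2; case: u => u1 u2; case: v => v1 v2; split_signs. Qed.

Lemma cross_ge0_ang_mono (f u v : vec) : f != (0, 0) -> u != (0, 0) -> v != (0, 0) ->
  half f = 0%N -> ang_lt f u -> ~~ ang_lt v u -> 0 <= cross u f -> 0 <= cross v f.
Proof. case: f => f1 f2; case: u => u1 u2; case: v => v1 v2; split_signs. Qed.

Lemma cross_eq0_trans (f u v : vec) : f != (0, 0) ->
  cross u f = 0 -> cross v f = 0 -> cross u v = 0.
Proof.
case: f => f1 f2; rewrite xpair_eqE /cross /= => f0 uf vf.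
have e1 : f1 * (u.1 * v.2 - u.2 * v.1) =
          v.1 * (u.1 * f2 - u.2 * f1) - u.1 * (v.1 * f2 - v.2 * f1) by ring.
have e2 : f2 * (u.1 * v.2 - u.2 * v.1) =
          v.2 * (u.1 * f2 - u.2 * f1) - u.2 * (v.1 * f2 - v.2 * f1) by ring.
rewrite uf vf !mulr0 subrr in e1 e2.
by case/nandP: f0 => /negPf f0; apply/eqP; [move/eqP: e1 | move/eqP: e2];
  rewrite mulf_eq0 f0.
Qed.

Lemma cross_rot (a b : vec) : cross (rot a) (rot b) = cross a b.
Proof. rewrite /cross /rot /=; lia. Qed.

Lemma dot_rot (a b : vec) : dot (rot a) (rot b) = dot a b.
Proof. rewrite /dot /rot /=; lia. Qed.

Lemma dot_cross_rot (w a : vec) : dot w a = cross w (rot a).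
Proof. rewrite /dot /cross /rot /=; lia. Qed.

Lemma rot_eq0 (a : vec) : (rot a == (0, 0)) = (a == (0, 0)).
Proof. by case: a => a1 a2; rewrite /rot /= !xpair_eqE oppr_eq0 andbC. Qed.

Lemma latlen_gt0 (a : vec) : a != (0, 0) -> (0 < latlen a)%N.
Proof.
case: a => a1 a2; rewrite /latlen /= xpair_eqE gcdn_gt0 !absz_gt0.
by case/nandP => ->; rewrite ?orbT.
Qed.

Lemma rot_prim_edge (a : vec) : rot a = vscale (latlen a)%:Z (prim_edge a).
Proof.
case: a => a1 a2; rewrite /vscale /prim_edge /rot /latlen /= !(mulrC (Posz _)).
by rewrite !divzK // dvdzE ?abszN ?dvdn_gcdr ?dvdn_gcdl.
Qed.

Lemma prim_edge_neq0 (a : vec) : a != (0, 0) -> prim_edge a != (0, 0).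
Proof.
rewrite -rot_eq0 rot_prim_edge; apply: contra => /eqP ->.
by rewrite /vscale /= mulr0.
Qed.

Lemma gcdz_prim_edge (a : vec) : a != (0, 0) -> gcdz (prim_edge a).1 (prim_edge a).2 = 1.
Proof.
move=> a0; have g0 := latlen_gt0 a0.
have [e1 e2] : `|a.2|%N = (`|(prim_edge a).1| * latlen a)%N /\
               `|a.1|%N = (`|(prim_edge a).2| * latlen a)%N.
  have := congr1 (fun v => (`|v.1|%N, `|v.2|%N)) (rot_prim_edge a).
  by rewrite /rot /vscale /= abszN !abszM absz_nat !(mulnC (latlen a)) => -[-> ->].
have := muln_gcdl `|(prim_edge a).2|%N `|(prim_edge a).1|%N (latlen a).
rewrite -e1 -e2 -/(latlen a) gcdnC => E.
by rewrite /gcdz; congr Posz; apply/eqP; rewrite -(eqn_pmul2r g0) mul1n E.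
Qed.

Lemma gcdz1_parallel_scale (u v : vec) : gcdz u.1 u.2 = 1 -> cross u v = 0 ->
  exists lam, v = vscale lam u.
Proof.
move=> gu uv; have [s [t st]] := Bezoutz u.1 u.2; rewrite gu in st.
exists (s * v.1 + t * v.2); move: uv; rewrite /cross /vscale.
case: u {gu} st => u1 u2; case: v => v1 v2 /= st uv.
congr pair; apply/eqP; rewrite -subr_eq0.
  have -> : v1 - (s * v1 + t * v2) * u1 =
            (1 - (s * u1 + t * u2)) * v1 - t * (u1 * v2 - u2 * v1) by ring.
  by rewrite st uv subrr !mul0r mulr0 subr0.
have -> : v2 - (s * v1 + t * v2) * u2 =
          (1 - (s * u1 + t * u2)) * v2 + s * (u1 * v2 - u2 * v1) by ring.
by rewrite st uv subrr !mul0r mulr0 addr0.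
Qed.

Lemma gcdz1_parallel_eq (p q : vec) : gcdz p.1 p.2 = 1 -> gcdz q.1 q.2 = 1 ->
  cross p q = 0 -> 0 < dot p q -> p = q.
Proof.
move=> gp gq pq dpq.
have [lam eq] := gcdz1_parallel_scale gp pq.
have [mu ep] : exists mu, p = vscale mu q.
  by apply: gcdz1_parallel_scale gq _; move: pq; rewrite /cross; lia.
have p0 : p != (0, 0) by apply/eqP => p0; move: gp; rewrite p0.
suff lam1 : lam = 1 by rewrite eq lam1 /vscale !mul1r; case: (p).
move: p0 dpq ep; rewrite eq /vscale /dot; case: p {gp pq eq} => p1 p2 /=.
rewrite xpair_eqE => p0 dpq [e1 e2].
have ml : mu * lam = 1.
  by case/nandP: p0 => p0; apply: (mulIf p0); rewrite mul1r -mulrA -?e1 -?e2.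
have lam0 : 0 < lam.
  have sq : 0 <= p1 * p1 + p2 * p2 by nia.
  rewrite ltNge; apply: contraTN dpq => l0; rewrite -leNgt.
  by rewrite [p1 * _]mulrCA [p2 * _]mulrCA -mulrDr mulr_le0_ge0.
have mu0 : 0 < mu by rewrite -(pmulr_lgt0 _ lam0) ml.
nia.
Qed.

Lemma cross_vscale (s t : int) (u v : vec) :
  cross (vscale s u) (vscale t v) = s * t * cross u v.
Proof. by rewrite /cross /vscale /=; ring. Qed.

Lemma dot_vscale (s t : int) (u v : vec) :
  dot (vscale s u) (vscale t v) = s * t * dot u v.
Proof. by rewrite /dot /vscale /=; ring. Qed.

Lemma prim_edge_same_dir (a b : vec) : a != (0, 0) -> b != (0, 0) ->
  same_dir a b -> prim_edge a = prim_edge b.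
Proof.
move=> a0 b0; rewrite /same_dir -cross_rot -dot_rot !rot_prim_edge.
rewrite cross_vscale dot_vscale => /andP[/eqP c0 d0].
have ab0 : 0 < (latlen a)%:Z * (latlen b)%:Z by rewrite -PoszM ltz_nat muln_gt0 !latlen_gt0.
apply: gcdz1_parallel_eq; rewrite ?gcdz_prim_edge //.
  by apply/eqP; move/eqP: c0; rewrite mulf_eq0 gt_eqF.
by rewrite -(pmulr_rgt0 _ ab0).
Qed.

Lemma same_dir_rot (a b : vec) : same_dir (rot a) (rot b) = same_dir a b.
Proof. by rewrite /same_dir cross_rot dot_rot. Qed.

Lemma sorted_nth_count (T : eqType) (le : rel T) (P : pred T) (s : seq T) x0 t :
  transitive le -> sorted le s -> (forall x y, le x y -> P y -> P x) ->
  (t < size s)%N -> P (nth x0 s t) = (t < count P s)%N.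
Proof.
move=> le_tr; elim: s t => [|x s IH] //= t le_s P_down.
have le_x := order_path_min le_tr le_s.
case Px: (P x) => /=; first by case: t => [|t] //= ht; rewrite IH // (path_sorted le_s).
have -> : count P s = 0%N.
  apply/eqP; rewrite -leqn0 leqNgt -has_count; apply/hasP => -[y ys Py].
  by move/allP: le_x => /(_ y ys) /P_down /(_ Py); rewrite Px.
case: t => [|t] //= ht; apply/negP => Pt.
by move/allP: le_x => /(_ _ (mem_nth x0 ht)) /P_down /(_ Pt); rewrite Px.
Qed.

Lemma ltn_cut_inj (M a b : nat) : (a <= M)%N -> (b <= M)%N ->
  (forall t, (t < M)%N -> (t < a)%N = (t < b)%N) -> a = b.
Proof.
move=> aM bM cut; apply/eqP; rewrite eqn_leq; apply/andP; split; rewrite leqNgt; apply/negP.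
  by move=> ba; have := cut b (leq_trans ba aM); rewrite ba ltnn.
by move=> ab; have := cut a (leq_trans ab bM); rewrite ab ltnn.
Qed.

Lemma sumr_nat_gt0 (R : numDomainType) (F : nat -> R) (a b t0 : nat) :
  (forall t, (a <= t < b)%N -> 0 <= F t) -> (a <= t0 < b)%N -> 0 < F t0 ->
  0 < \sum_(a <= t < b) F t.
Proof.
move=> F_ge0 t0_in F_t0; rewrite big_nat_cond lt0r psumr_neq0 => [|t /andP[/F_ge0]] //.
rewrite sumr_ge0 ?andbT => [|t /andP[/F_ge0]] //.
by apply/hasP; exists t0; rewrite ?mem_index_iota // t0_in.
Qed.

Lemma sumr_nat_lt0 (R : numDomainType) (F : nat -> R) (a b t0 : nat) :
  (forall t, (a <= t < b)%N -> F t <= 0) -> (a <= t0 < b)%N -> F t0 < 0 ->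
  \sum_(a <= t < b) F t < 0.
Proof.
move=> F_le0 t0_in F_t0; rewrite -oppr_gt0 -sumrN.
by apply: sumr_nat_gt0 t0_in _ => [t /F_le0|]; rewrite ?oppr_ge0 ?oppr_gt0.
Qed.

(* [w t] will be the increment of the support function of a side [[p, q)] along the
   boundary walk: positive before the side, zero on it, and after it first
   nonpositive, then positive. *)
Lemma sum_sign_pattern (R : realDomainType) (w : nat -> R) (p q j M : nat) :
  (p <= q)%N -> (q < j <= M)%N ->
  (forall t, (t < p)%N -> 0 < w t) ->
  (forall t, (p <= t < q)%N -> w t = 0) ->
  (forall s t, (q <= s <= t)%N -> (t < M)%N -> 0 < w s -> 0 < w t) ->
  (forall s t, (q <= s <= t)%N -> (t < M)%N -> 0 <= w s -> 0 <= w t) ->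
  \sum_(0 <= t < M) w t = 0 -> (exists2 t, (t < M)%N & w t != 0) ->
  \sum_(q <= t < j) w t < 0 \/ (j = M /\ p = 0%N).
Proof.
move=> pq /andP[qj jM] w_head w_mid w_gt0 w_ge0 w_sum [t0 t0M wt0].
have qM : (q < M)%N := leq_trans qj jM.
have head_ge0 : 0 <= \sum_(0 <= t < p) w t.
  by rewrite big_nat_cond sumr_ge0 // => t /andP[/andP[_ /w_head /ltW]].
have sum_split : \sum_(0 <= t < M) w t = \sum_(0 <= t < p) w t + \sum_(q <= t < M) w t.
  rewrite (big_cat_nat (leq0n p) (leq_trans pq (ltnW qM))) /=.
  rewrite (big_cat_nat (n := q) pq (ltnW qM)) /=.
  suff -> : \sum_(p <= t < q) w t = 0 by rewrite add0r.
  by rewrite big_nat_cond big1 // => t /andP[/w_mid].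
have wq : w q < 0.
  rewrite ltNge; apply/negP => wq_ge0.
  have all_ge0 t : (t < M)%N -> 0 <= w t.
    move=> tM; case: (ltnP t p) => [/w_head/ltW //|pt].
    case: (ltnP t q) => [tq|qt]; first by rewrite w_mid ?pt.
    by apply: (w_ge0 q) => //; rewrite leqnn.
  suff : 0 < \sum_(0 <= t < M) w t by rewrite w_sum ltxx.
  by apply: (sumr_nat_gt0 (t0 := t0)) => [t /andP[_ /all_ge0]| |] //; rewrite lt0r wt0 all_ge0.
have [/hasP[t1]|/hasPn w_le0] := boolP (has (fun t => 0 < w t) (index_iota q j)).
  rewrite mem_index_iota => /andP[qt1 t1j] wt1.
  have tail_gt0 t : (t1 <= t < M)%N -> 0 < w t.
    by case/andP=> t1t tM; apply: (w_gt0 t1) => //; rewrite qt1.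
  have q_split : \sum_(q <= t < M) w t = \sum_(q <= t < j) w t + \sum_(j <= t < M) w t.
    by rewrite (big_cat_nat (ltnW qj) jM) /=.
  case: (ltnP j M) => [jM'|Mj].
    have : 0 < \sum_(j <= t < M) w t.
      apply: (sumr_nat_gt0 (t0 := j)) => [t /andP[jt tM]||]; rewrite ?leqnn ?jM' //.
        by apply/ltW/tail_gt0; rewrite tM (leq_trans (ltnW t1j)).
      by apply: tail_gt0; rewrite jM' ltnW.
    by left; move: w_sum; rewrite sum_split q_split; lra.
  have jM_eq : j = M by apply/eqP; rewrite eqn_leq jM.
  have [p0|p_gt0] := posnP p; first by right.
  have : 0 < \sum_(0 <= t < p) w t.
    by apply: (sumr_nat_gt0 (t0 := 0)) => [t /andP[_ /w_head /ltW]||]; rewrite ?p_gt0 ?w_head.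
  by left; move: w_sum; rewrite sum_split jM_eq; lra.
left; apply: (sumr_nat_lt0 (t0 := q)) => [t tj||] //; last by rewrite leqnn.
by rewrite leNgt; apply: w_le0; rewrite mem_index_iota.
Qed.

Lemma block_chain (T : Type) (A : nat -> T) (lo hi : nat -> nat) (M : nat) :
  (0 < M)%N -> hi M.-1 = M ->
  (forall t, (t < M)%N -> (lo t <= t)%N) ->
  (forall t, (t < M)%N -> (0 < lo t)%N -> hi (lo t).-1 = lo t) ->
  (forall t, (t < M)%N -> A (lo t) = A (hi t)) -> A 0%N = A M.
Proof.
move=> M0 hi_last lo_le hi_prev A_block.
have A_lo t : (t < M)%N -> A 0%N = A (lo t).
  elim/ltn_ind: t => t IH tM; have [->|lo_gt0] := posnP (lo t); first by [].
  have st : ((lo t).-1 < t)%N by rewrite prednK ?lo_le.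
  have sM : ((lo t).-1 < M)%N := ltn_trans st tM.
  by rewrite -(hi_prev t) // -A_block // (IH _ st).
have lastM : (M.-1 < M)%N by rewrite prednK.
by rewrite -hi_last -A_block // (A_lo _ lastM).
Qed.

Lemma side_poly_coef (R : realType) (D : seq vec) (c : vec -> R[i]) a j :
  (side_poly D c a)`_j = if (j <= side_len D a)%N then c (side_pt D a j) else 0.
Proof. by rewrite /side_poly -(poly_def _ (fun k => c (side_pt D a k))) coef_poly. Qed.

Section BoundaryWalk.

Variable D : seq vec.
Hypothesis D_nz : Delta_nonzero_vecs D.
Hypothesis D_bal : Delta_balanced D.
Hypothesis D_ndeg : Delta_nondegenerate D.
Variable x0 : 'I_(size D).

Definition dvec (l : 'I_(size D)) : vec := nth (0, 0) D l.
Definition edge (l : 'I_(size D)) : vec := rot (dvec l).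

Definition edge_le : rel 'I_(size D) := fun x y => ~~ ang_lt (edge y) (edge x).

(* The boundary walk of [P_Delta]: label [l] occurs [latlen (dvec l)] times and
   stands for the step [prim_edge (dvec l)]; the side of [l] is the block of
   positions [[side_beg l, side_end l)], and [bpoint k] is the lattice point
   reached after [k] steps from the vertex [vstart] places at the origin. *)
Definition edge_seq : seq 'I_(size D) :=
  sort edge_le (flatten [seq nseq (latlen (dvec l)) l | l <- enum 'I_(size D)]).
Local Notation M := (size edge_seq).
Definition lab (t : nat) : 'I_(size D) := nth x0 edge_seq t.
Definition side_beg (l : 'I_(size D)) : nat :=
  count (fun x => ang_lt (edge x) (edge l)) edge_seq.
Definition side_end (l : 'I_(size D)) : nat :=
  count (fun x => ~~ ang_lt (edge l) (edge x)) edge_seq.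
Definition edge_step (t : nat) : vec := prim_edge (dvec (lab t)).
Definition bpoint (k : nat) : vec :=
  (\sum_(0 <= t < k) (edge_step t).1, \sum_(0 <= t < k) (edge_step t).2).

Lemma dvec_neq0 l : dvec l != (0, 0).
Proof. by move/allP: D_nz; apply; rewrite mem_nth. Qed.

Lemma edge_neq0 l : edge l != (0, 0).
Proof. by rewrite rot_eq0 dvec_neq0. Qed.

Lemma perm_edge_seq :
  perm_eq edge_seq (flatten [seq nseq (latlen (dvec l)) l | l <- enum 'I_(size D)]).
Proof. by rewrite perm_sort. Qed.

Lemma big_edge_seq (T : Type) (idx : T) (op : Monoid.com_law idx)
    (P : pred 'I_(size D)) (F : 'I_(size D) -> T) :
  \big[op/idx]_(x <- edge_seq | P x) F x =
  \big[op/idx]_(l | P l) iter (latlen (dvec l)) (op (F l)) idx.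
Proof.
rewrite (perm_big _ perm_edge_seq) big_flatten big_map big_enum /= [RHS]big_mkcond.
by apply: eq_bigr => l _; rewrite big_nseq_cond.
Qed.

Lemma mem_edge_seq l : l \in edge_seq.
Proof.
rewrite (perm_mem perm_edge_seq); apply/flattenP; exists (nseq (latlen (dvec l)) l).
  by apply: map_f; rewrite mem_enum.
by rewrite mem_nseq eqxx andbT latlen_gt0 // dvec_neq0.
Qed.

Lemma lab_surj l : exists2 t, (t < M)%N & lab t = l.
Proof.
have l_in := mem_edge_seq l.
by exists (index l edge_seq); [rewrite index_mem | rewrite /lab nth_index].
Qed.

Lemma edge_seq_gt0 : (0 < M)%N.
Proof. by have [t tM _] := lab_surj x0; apply: leq_ltn_trans tM. Qed.

Lemma dvec_onto v : v \in D -> exists l, dvec l = v.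
Proof. by move=> vD; exists (Ordinal (etrans (index_mem v D) vD)); rewrite /dvec nth_index. Qed.

Lemma edge_seq_sorted : sorted edge_le edge_seq.
Proof.
apply: sort_sorted => x y; rewrite -negb_and; apply/negP => /andP[xy yx].
by move: (ang_lt_trans xy yx); rewrite (negPf (ang_lt_irr _)).
Qed.

Lemma edge_le_trans : transitive edge_le.
Proof.
move=> y x z yx zy; apply/negP => zx.
by case/orP: (ang_lt_cotrans (edge_neq0 z) (edge_neq0 y) (edge_neq0 x) zx);
  [apply/negP | apply/negP].
Qed.

Lemma edge_seq_mono t t' : (t <= t')%N -> (t' < M)%N ->
  ~~ ang_lt (edge (lab t')) (edge (lab t)).
Proof.
move=> tt' t'M; have irr x : ~~ ang_lt (edge x) (edge x) by apply: ang_lt_irr.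
have := sorted_leq_nth edge_le_trans irr x0 edge_seq_sorted; apply => //.
by rewrite inE (leq_ltn_trans tt').
Qed.

Lemma lab_before l t : (t < M)%N -> ang_lt (edge (lab t)) (edge l) = (t < side_beg l)%N.
Proof.
move=> tM; apply: sorted_nth_count edge_le_trans edge_seq_sorted _ tM => x y.
rewrite /edge_le => yx yl.
by case/orP: (ang_lt_cotrans (edge_neq0 y) (edge_neq0 x) (edge_neq0 l) yl) => // xy;
  rewrite xy in yx.
Qed.

Lemma lab_upto l t : (t < M)%N -> ~~ ang_lt (edge l) (edge (lab t)) = (t < side_end l)%N.
Proof.
move=> tM; apply: sorted_nth_count edge_le_trans edge_seq_sorted _ tM => x y.
rewrite /edge_le => yx ly.
apply: contra ly => lx.
by case/orP: (ang_lt_cotrans (edge_neq0 l) (edge_neq0 y) (edge_neq0 x) lx) => // yx';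
  rewrite yx' in yx.
Qed.

Lemma side_beg_le_end l : (side_beg l <= side_end l)%N.
Proof.
apply: sub_count => x /=; apply: contraL => lx; apply/negP => xl.
by move: (ang_lt_trans xl lx); rewrite (negPf (ang_lt_irr _)).
Qed.

Lemma side_end_le l : (side_end l <= M)%N.
Proof. exact: count_size. Qed.

Lemma lab_side t : (t < M)%N -> (side_beg (lab t) <= t < side_end (lab t))%N.
Proof. by move=> tM; rewrite leqNgt -lab_before // -lab_upto // ang_lt_irr. Qed.

Lemma lab_in_side l t : (t < M)%N ->
  same_dir (dvec l) (dvec (lab t)) = (side_beg l <= t < side_end l)%N.
Proof.
move=> tM; rewrite -same_dir_rot -ang_eqv_same_dir ?edge_neq0 //.
by rewrite lab_upto // lab_before // -leqNgt andbC.
Qed.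

Lemma side_same l l' : same_dir (dvec l) (dvec l') ->
  side_beg l' = side_beg l /\ side_end l' = side_end l.
Proof.
rewrite -same_dir_rot -ang_eqv_same_dir ?edge_neq0 // => /andP[ll' l'l].
have cotrans u v w := @ang_lt_cotrans (edge u) (edge v) (edge w)
  (edge_neq0 u) (edge_neq0 v) (edge_neq0 w).
split; apply: eq_count => x /=; apply/idP/idP.
- by move=> /(cotrans x l); rewrite (negPf ll') orbF.
- by move=> /(cotrans x l'); rewrite (negPf l'l) orbF.
- by apply: contra => /(cotrans l l'); rewrite (negPf ll').
- by apply: contra => /(cotrans l' l); rewrite (negPf l'l).
Qed.

Lemma side_beg_next l : (side_end l < M)%N -> side_beg (lab (side_end l)) = side_end l.
Proof.
move=> eM; set g := lab (side_end l).
have lg : ang_lt (edge l) (edge g) by apply/negPn; rewrite lab_upto // ltnn.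
apply: (ltn_cut_inj (count_size _ _) (side_end_le l)) => t tM.
rewrite -lab_before // -lab_upto //; apply/idP/negP => [tg lt | /negP lt].
  have et : (side_end l <= t)%N by rewrite leqNgt -lab_upto // lt.
  by move: (edge_seq_mono et tM); rewrite tg.
by case/orP: (ang_lt_cotrans (edge_neq0 l) (edge_neq0 (lab t)) (edge_neq0 g) lg);
  rewrite ?(negPf lt).
Qed.

Lemma side_end_prev l : (0 < side_beg l)%N -> side_end (lab (side_beg l).-1) = side_beg l.
Proof.
move=> b0; set g := lab (side_beg l).-1.
have bM : ((side_beg l).-1 < M)%N by rewrite prednK // count_size.
have gl : ang_lt (edge g) (edge l) by rewrite lab_before // prednK.
apply: (ltn_cut_inj (side_end_le g) (count_size _ _)) => t tM.
rewrite -lab_before // -lab_upto //; apply/idP/idP => [/negP gt | tl].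
  by case/orP: (ang_lt_cotrans (edge_neq0 g) (edge_neq0 (lab t)) (edge_neq0 l) gl);
    rewrite ?(negPf gt).
by apply: edge_seq_mono => //; rewrite -ltnS prednK // -lab_before.
Qed.

Lemma side_beg_first : side_beg (lab 0) = 0%N.
Proof.
apply: (ltn_cut_inj (count_size _ _) (leq0n M)) => t tM.
by rewrite -lab_before // ltn0; apply: negbTE (edge_seq_mono _ tM).
Qed.

Lemma side_end_last : side_end (lab M.-1) = M.
Proof.
have M0 := edge_seq_gt0; apply: (ltn_cut_inj (side_end_le _) (leqnn M)) => t tM.
by rewrite -lab_upto // tM; apply: edge_seq_mono; rewrite ?prednK // -ltnS prednK.
Qed.

Lemma big_edge_range (T : Type) (idx : T) (op : Monoid.com_law idx)
    (P : pred 'I_(size D)) (F : 'I_(size D) -> T) (a b : nat) :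
  (b <= M)%N -> (forall t, (t < M)%N -> P (lab t) = (a <= t < b)%N) ->
  \big[op/idx]_(a <= t < b) F (lab t) =
  \big[op/idx]_(l | P l) iter (latlen (dvec l)) (op (F l)) idx.
Proof.
move=> bM Plab; rewrite -big_edge_seq (big_nth x0) -/M.
rewrite (big_nat_widen _ _ _ _ _ bM) (big_nat_widenl _ _ _ _ _ (leq0n a)).
rewrite [LHS]big_nat_cond [RHS]big_nat_cond; apply: eq_bigl => t /=.
by case: (ltnP t M) => tM; rewrite ?andbF //= Plab // andbC.
Qed.

Lemma big_side (T : Type) (idx : T) (op : Monoid.com_law idx) l (F : 'I_(size D) -> T) :
  \big[op/idx]_(side_beg l <= t < side_end l) F (lab t) =
  \big[op/idx]_(l' | same_dir (dvec l) (dvec l')) iter (latlen (dvec l')) (op (F l')) idx.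
Proof. by apply: big_edge_range (side_end_le l) _ => t tM; rewrite lab_in_side. Qed.

Lemma side_len_side l : side_len D (dvec l) = (side_end l - side_beg l)%N.
Proof.
rewrite -[RHS]muln1 -sum_nat_const_nat (big_side addn l (fun=> 1%N)).
rewrite /side_len (big_nth (0, 0)) big_mkord.
by apply: eq_bigr => l' _; rewrite iter_addn_0 mul1n.
Qed.

Lemma edge_step_side l t : (side_beg l <= t < side_end l)%N -> edge_step t = prim_edge (dvec l).
Proof.
move=> lt; have tM : (t < M)%N by case/andP: lt => _ /leq_trans; apply; apply: side_end_le.
by apply: esym (prim_edge_same_dir (dvec_neq0 _) (dvec_neq0 _) _); rewrite lab_in_side.
Qed.

Lemma sum_edge_range (c : vec -> int) (P : pred 'I_(size D)) (a b : nat) :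
  (forall j u, c (vscale j u) = j * c u) ->
  (b <= M)%N -> (forall t, (t < M)%N -> P (lab t) = (a <= t < b)%N) ->
  \sum_(a <= t < b) c (edge_step t) = \sum_(l | P l) c (edge l).
Proof.
move=> cZ bM Plab; rewrite (big_edge_range _ (fun l => c (prim_edge (dvec l))) bM Plab).
by apply: eq_bigr => l _; rewrite iter_addr_0 /edge rot_prim_edge cZ -mulr_natl natz.
Qed.

Lemma foldr_vadd (r : seq vec) :
  foldr vadd (0, 0) r = (\sum_(x <- r) x.1, \sum_(x <- r) x.2).
Proof. by elim: r => [|x r IH]; rewrite ?big_nil ?big_cons //= IH. Qed.

Lemma bpoint0 : bpoint 0 = (0, 0).
Proof. by rewrite /bpoint !big_geq. Qed.

Lemma bpoint_side_beg l : bpoint (side_beg l) = vstart D (dvec l).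
Proof.
rewrite /vstart foldr_vadd !big_map !big_filter !(big_nth (0, 0)) !big_mkord.
by congr pair; apply: sum_edge_range (count_size _ _) _ => // t tM; rewrite lab_before.
Qed.

Lemma bpoint_perim : bpoint M = (0, 0).
Proof.
case: D_bal => sum1 sum2; rewrite /bpoint.
have all_lab t : (t < M)%N -> predT (lab t) = (0 <= t < M)%N by move=> tM; rewrite tM.
rewrite (sum_edge_range (c := fst) _ _ all_lab) // (sum_edge_range (c := snd) _ _ all_lab) //.
rewrite /edge /rot /= sumrN.
move: sum1 sum2; rewrite !(big_nth (0, 0)) !big_mkord => sum1 sum2.
by rewrite [X in (- X, _)]sum2 sum1 oppr0.
Qed.

Lemma bpoint_side l j : (side_beg l + j <= side_end l)%N ->
  bpoint (side_beg l + j) = vadd (bpoint (side_beg l)) (vscale j%:Z (prim_edge (dvec l))).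
Proof.
move=> hj; rewrite /bpoint /vadd /vscale.
have const (c : vec -> int) : \sum_(side_beg l <= t < side_beg l + j) c (edge_step t) =
    j%:Z * c (prim_edge (dvec l)).
  rewrite big_nat_cond (eq_bigr (fun=> c (prim_edge (dvec l)))).
    by rewrite -big_nat_cond sumr_const_nat addKn -mulr_natl natz.
  move=> t /andP[/andP[bt tj] _]; rewrite (@edge_step_side l) // bt.
  exact: leq_trans tj hj.
by rewrite !(big_cat_nat (n := side_beg l) (leq0n _) (leq_addr j _)) (const fst) (const snd).
Qed.

Lemma side_pt_bpoint l j : (side_beg l + j <= side_end l)%N ->
  side_pt D (dvec l) j = bpoint (side_beg l + j).
Proof. by move=> hj; rewrite bpoint_side // bpoint_side_beg. Qed.

Lemma cross_bpoint k f : cross (bpoint k) f = \sum_(0 <= t < k) cross (edge_step t) f.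
Proof. by rewrite /cross /bpoint /= !mulr_suml -sumrB. Qed.

Lemma cross_edge_lab t f :
  cross (edge (lab t)) f = (latlen (dvec (lab t)))%:Z * cross (edge_step t) f.
Proof. by rewrite /edge rot_prim_edge /cross /vscale /=; ring. Qed.

Lemma latlen_lab_gt0 t : 0 < (latlen (dvec (lab t)))%:Z.
Proof. by rewrite ltz_nat latlen_gt0 ?dvec_neq0. Qed.

Section SideSupport.

Variable l : 'I_(size D).
Local Notation w t := (cross (edge_step t) (edge l)).

Lemma cross_step_before t : half (edge l) = 0%N -> (t < side_beg l)%N -> 0 < w t.
Proof.
move=> up tb; have tM : (t < M)%N := leq_trans tb (count_size _ _).
rewrite -(pmulr_rgt0 _ (latlen_lab_gt0 t)) -cross_edge_lab.
by apply: cross_gt0_ang_lt_upper; rewrite // lab_before.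
Qed.

Lemma cross_step_side t : (side_beg l <= t < side_end l)%N -> w t = 0.
Proof.
move=> tl; rewrite (edge_step_side tl) /edge rot_prim_edge /cross /vscale /=; ring.
Qed.

Lemma ang_lt_edge_after t : (side_end l <= t < M)%N -> ang_lt (edge l) (edge (lab t)).
Proof. by case/andP=> et tM; apply/negPn; rewrite lab_upto // -leqNgt. Qed.

Lemma cross_step_after_lower t : half (edge l) != 0%N -> (side_end l <= t < M)%N -> w t < 0.
Proof.
move=> low tl; rewrite -(pmulr_rlt0 _ (latlen_lab_gt0 t)) -cross_edge_lab.
exact: cross_lt0_ang_gt_lower (ang_lt_edge_after tl).
Qed.

Lemma cross_step_after_upper_gt0 s t : half (edge l) = 0%N ->
  (side_end l <= s <= t)%N -> (t < M)%N -> 0 < w s -> 0 < w t.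
Proof.
move=> up /andP[es st] tM; have sM : (s < M)%N := leq_ltn_trans st tM.
rewrite -(pmulr_rgt0 (w s) (latlen_lab_gt0 s)) -(pmulr_rgt0 (w t) (latlen_lab_gt0 t)).
rewrite -!cross_edge_lab; apply: cross_gt0_ang_mono; rewrite ?edge_neq0 //.
  by rewrite ang_lt_edge_after // es.
exact: edge_seq_mono.
Qed.

Lemma cross_step_after_upper_ge0 s t : half (edge l) = 0%N ->
  (side_end l <= s <= t)%N -> (t < M)%N -> 0 <= w s -> 0 <= w t.
Proof.
move=> up /andP[es st] tM; have sM : (s < M)%N := leq_ltn_trans st tM.
rewrite -(pmulr_rge0 (w s) (latlen_lab_gt0 s)) -(pmulr_rge0 (w t) (latlen_lab_gt0 t)).
rewrite -!cross_edge_lab; apply: cross_ge0_ang_mono; rewrite ?edge_neq0 //.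
  by rewrite ang_lt_edge_after // es.
exact: edge_seq_mono.
Qed.

Lemma cross_step_neq0 : exists2 t, (t < M)%N & w t != 0.
Proof.
have [/hasP[t]|/hasPn w0] := boolP (has (fun t => w t != 0) (iota 0 M)).
  by rewrite mem_iota => tM; exists t.
have [a aD [b bD /negP ab]] := D_ndeg; exfalso; apply: ab.
have edge_par v : v \in D -> cross (rot v) (edge l) = 0.
  case/dvec_onto=> l' <-; have [t tM <-] := lab_surj l'.
  by rewrite -/(edge _) cross_edge_lab (eqP (negbNE (w0 t _))) ?mulr0 // mem_iota.
by rewrite -cross_rot (cross_eq0_trans (edge_neq0 l) (edge_par a aD) (edge_par b bD)).
Qed.

Lemma cross_bpoint_split a b : (a <= b)%N ->
  cross (bpoint b) (edge l) = cross (bpoint a) (edge l) + \sum_(a <= t < b) w t.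
Proof. by move=> ab; rewrite !cross_bpoint (big_cat_nat (leq0n a) ab). Qed.

Lemma cross_bpoint_side k : (side_beg l <= k <= side_end l)%N ->
  cross (bpoint k) (edge l) = cross (bpoint (side_beg l)) (edge l).
Proof.
case/andP=> bk ke; rewrite (cross_bpoint_split bk) big_nat_cond big1 ?addr0 //.
move=> t /andP[/andP[bt tk] _]; apply: cross_step_side.
by rewrite bt (leq_trans tk ke).
Qed.

Lemma cross_bpoint_perim : cross (bpoint M) (edge l) = 0.
Proof. by rewrite bpoint_perim /cross /= !mul0r subr0. Qed.

Lemma side_support : 0 <= cross (bpoint (side_beg l)) (edge l).
Proof.
have [up|low] := eqVneq (half (edge l)) 0%N.
  rewrite cross_bpoint big_nat_cond sumr_ge0 // => t /andP[/andP[_ tb] _].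
  exact/ltW/cross_step_before.
have := cross_bpoint_perim; rewrite (cross_bpoint_split (side_end_le l)).
rewrite cross_bpoint_side ?side_beg_le_end ?leqnn //.
have : \sum_(side_end l <= t < M) w t <= 0.
  by rewrite big_nat_cond -oppr_ge0 -sumrN sumr_ge0 // => t /andP[tl _];
    rewrite oppr_ge0 ltW // cross_step_after_lower.
lra.
Qed.

(* After the side of [l] the walk stays strictly inside the supporting half plane of
   that side, except for its return to the origin when the side starts there. *)
Lemma bpoint_off_side j : (side_end l < j <= M)%N ->
  cross (bpoint j) (edge l) < cross (bpoint (side_beg l)) (edge l) \/
  (j = M /\ side_beg l = 0%N).
Proof.
case/andP=> ej jM; rewrite (cross_bpoint_split (ltnW ej)).
rewrite cross_bpoint_side ?side_beg_le_end ?leqnn //.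
suff : \sum_(side_end l <= t < j) w t < 0 \/ (j = M /\ side_beg l = 0%N).
  by case=> [S_lt0|]; [left; lra | right].
have [up|low] := eqVneq (half (edge l)) 0%N; last first.
  left; apply: (sumr_nat_lt0 (t0 := side_end l)) => [t /andP[et tj]||].
  - by rewrite ltW // cross_step_after_lower // et (leq_trans tj jM).
  - by rewrite leqnn.
  - by rewrite cross_step_after_lower // leqnn (leq_trans ej jM).
apply: sum_sign_pattern; rewrite ?side_beg_le_end ?ej //.
- by move=> t; apply: cross_step_before.
- exact: cross_step_side.
- by move=> s t; apply: cross_step_after_upper_gt0.
- by move=> s t; apply: cross_step_after_upper_ge0.
- by rewrite -cross_bpoint cross_bpoint_perim.
- exact: cross_step_neq0.
Qed.

End SideSupport.

Lemma bpoint_side_inj l i j : (side_beg l <= i <= side_end l)%N ->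
  (side_beg l <= j <= side_end l)%N -> bpoint i = bpoint j -> i = j.
Proof.
move=> /andP[bi ie] /andP[bj je]; rewrite -(subnKC bi) -(subnKC bj).
rewrite !bpoint_side ?subnKC //; case: (bpoint _) => p1 p2.
have := prim_edge_neq0 (dvec_neq0 l); case: (prim_edge _) => u1 u2.
rewrite /vadd /vscale /= xpair_eqE => /nandP u0 [/addrI e1 /addrI e2].
have : (i - side_beg l)%N = (j - side_beg l)%N.
  by apply/eqP; rewrite -eqz_nat; apply/eqP; case: u0 => u0; apply: (mulIf u0).
lia.
Qed.

Lemma bpoint_inj i j : (i < j <= M)%N -> bpoint i = bpoint j -> i = 0%N /\ j = M.
Proof.
case/andP=> ij jM eq_ij; have iM : (i < M)%N := leq_trans ij jM.
set l := lab i; have /andP[bi ie] := lab_side iM.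
have i_on : (side_beg l <= i <= side_end l)%N by rewrite bi ltnW.
have [je|ej] := leqP j (side_end l).
  have := bpoint_side_inj i_on _ eq_ij; rewrite (leq_trans bi (ltnW ij)) je => /(_ isT).
  by move=> eij; rewrite eij ltnn in ij.
have := bpoint_off_side (l := l) (j := j); rewrite ej jM => /(_ isT) [|[jM_eq b0]].
  by rewrite -eq_ij cross_bpoint_side // ltxx.
split=> //; apply: (bpoint_side_inj (l := l)) => //; first by rewrite b0.
by rewrite eq_ij jM_eq bpoint_perim -bpoint0.
Qed.

Section Menelaus.

Variable R : realType.
Variable z : 'I_(size D) -> R[i].

Definition side_factor (l : 'I_(size D)) : {poly R[i]} :=
  \prod_(side_beg l <= t < side_end l) ('X - (z (lab t))%:P).
Definition tail_prod (k : nat) : R[i] := \prod_(k <= t < M) - z (lab t).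

Lemma side_factor_menelaus l :
  \prod_(l' < size D | same_dir (dvec l) (dvec l')) ('X - (z l')%:P) ^+ latlen (dvec l') =
  side_factor l.
Proof.
by rewrite /side_factor (big_side _ l (fun l' => 'X - (z l')%:P));
  apply: eq_bigr => l' _; rewrite iter_mulr_1.
Qed.

Lemma side_factor_seq l : side_factor l =
  \prod_(x <- [seq z (lab t) | t <- index_iota (side_beg l) (side_end l)]) ('X - x%:P).
Proof. by rewrite big_map. Qed.

Lemma size_side_factor l : size (side_factor l) = (side_end l - side_beg l).+1.
Proof. by rewrite side_factor_seq size_prod_XsubC size_map size_iota. Qed.

Lemma side_factor_monic l : side_factor l \is monic.
Proof. by rewrite side_factor_seq monic_prod_XsubC. Qed.

Lemma side_factor_lead l : (side_factor l)`_(side_end l - side_beg l) = 1.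
Proof. by have /monicP := side_factor_monic l; rewrite lead_coefE size_side_factor. Qed.

Lemma side_factor_coef0 l :
  (side_factor l)`_0 = \prod_(side_beg l <= t < side_end l) - z (lab t).
Proof.
by rewrite -horner_coef0 horner_prod; apply: eq_bigr => t _; rewrite hornerXsubC sub0r.
Qed.

Lemma side_end_coefs (c : vec -> R[i]) l lam :
  side_poly D c (dvec l) = lam *: side_factor l ->
  c (bpoint (side_beg l)) = lam * \prod_(side_beg l <= t < side_end l) - z (lab t) /\
  c (bpoint (side_end l)) = lam.
Proof.
move=> E; have be := side_beg_le_end l.
split.
  have := congr1 (fun p : {poly R[i]} => p`_0) E.
  by rewrite /= side_poly_coef coefZ side_factor_coef0 side_pt_bpoint ?addn0.
have := congr1 (fun p : {poly R[i]} => p`_(side_end l - side_beg l)) E.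
by rewrite /= side_poly_coef coefZ side_factor_lead mulr1 side_len_side leqnn
  side_pt_bpoint subnKC.
Qed.

Lemma menelaus_tail_prod : menelaus D z -> tail_prod 0 = 1.
Proof.
move=> [c [_ side]].
(* [A] is constant along the walk: on each side the Menelaus condition fixes the
   ratio of the coefficients at the two ends. *)
pose A k := (\prod_(0 <= t < k) - z (lab t)) * c (bpoint k).
have block l : A (side_beg l) = A (side_end l) /\ c (bpoint (side_end l)) != 0.
  have [_ [lam lam0]] := side l; rewrite side_factor_menelaus.
  case/side_end_coefs => c_beg c_end; split; last by rewrite c_end.
  rewrite /A c_beg c_end (big_cat_nat (leq0n _) (side_beg_le_end l)) /=.
  ring.
have c0 : c (bpoint 0) != 0.
  by rewrite bpoint0 -bpoint_perim -{1}side_end_last (proj2 (block _)).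
have := @block_chain _ A (fun t => side_beg (lab t)) (fun t => side_end (lab t)) M
  edge_seq_gt0 side_end_last (fun t tM => proj1 (andP (lab_side tM)))
  (fun t _ => @side_end_prev (lab t)) (fun t _ => proj1 (block (lab t))).
rewrite /A big_geq // mul1r bpoint_perim -bpoint0 => /esym.
by rewrite -{2}[c (bpoint 0)]mul1r => /(mulIf c0).
Qed.

(* The coefficients of the curve on the boundary, side by side: on the side of [l]
   they are those of [tail_prod (side_end l) *: side_factor l]. *)
Definition curve_val (k : nat) : R[i] :=
  tail_prod (side_end (lab k)) * (side_factor (lab k))`_(k - side_beg (lab k)).
Definition curve_coef (w : vec) : R[i] :=
  if [pick k : 'I_M | bpoint k == w] is Some k then curve_val k else 0.

Lemma curve_coef_bpoint k : (k < M)%N -> curve_coef (bpoint k) = curve_val k.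
Proof.
move=> kM; rewrite /curve_coef; case: pickP => [k' /eqP e|/(_ (Ordinal kM))]; last by rewrite eqxx.
have k'M := ltn_ord k'; congr curve_val.
have [k'k|kk'|//] := ltngtP k' k.
  have := bpoint_inj (i := k') (j := k); rewrite k'k (ltnW kM) => /(_ isT e) [_ eM].
  by rewrite eM ltnn in kM.
have := bpoint_inj (i := k) (j := k'); rewrite kk' (ltnW k'M) => /(_ isT (esym e)) [_ eM].
by rewrite eM ltnn in k'M.
Qed.

Lemma curve_val_side_beg k : (k < M)%N -> side_beg (lab k) = k -> curve_val k = tail_prod k.
Proof.
move=> kM bk; rewrite /curve_val bk subnn side_factor_coef0 bk mulrC /tail_prod.
by rewrite -big_cat_nat ?side_end_le //= -{1}bk side_beg_le_end.
Qed.

Lemma curve_val_side l j : (side_beg l + j < side_end l)%N ->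
  curve_val (side_beg l + j) = tail_prod (side_end l) * (side_factor l)`_j.
Proof.
move=> jl; have kM := leq_trans jl (side_end_le l); rewrite /curve_val /side_factor.
have /side_same[-> ->] : same_dir (dvec l) (dvec (lab (side_beg l + j))).
  by rewrite lab_in_side // leq_addr.
by rewrite addKn.
Qed.

Lemma curve_coef_side_end l : tail_prod 0 = 1 -> curve_coef (bpoint (side_end l)) = tail_prod (side_end l).
Proof.
move=> prod1; have [eM|] := ltnP (side_end l) M.
  by rewrite curve_coef_bpoint // curve_val_side_beg // side_beg_next.
rewrite leq_eqVlt ltnNge side_end_le orbF => /eqP <-.
rewrite bpoint_perim -bpoint0 curve_coef_bpoint ?curve_val_side_beg ?side_beg_first ?edge_seq_gt0 //.
by rewrite prod1 /tail_prod big_geq.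
Qed.

Lemma side_poly_curve_coef l : tail_prod 0 = 1 ->
  side_poly D curve_coef (dvec l) = tail_prod (side_end l) *: side_factor l.
Proof.
move=> prod1; apply/polyP => j; rewrite side_poly_coef coefZ side_len_side.
have be := side_beg_le_end l.
have [jl|lj|->] := ltngtP j (side_end l - side_beg l).
- have jl' : (side_beg l + j < side_end l)%N by rewrite -ltn_subRL.
  rewrite side_pt_bpoint ?(ltnW jl') // curve_coef_bpoint ?curve_val_side //.
  exact: leq_trans jl' (side_end_le l).
- by rewrite nth_default ?mulr0 // size_side_factor.
- by rewrite side_pt_bpoint subnKC // curve_coef_side_end // side_factor_lead mulr1.
Qed.

Lemma tail_prod_neq0 k : (forall l, z l != 0) -> tail_prod k != 0.
Proof. by move=> z0; rewrite prodf_seq_neq0; apply/allP => t _ /=; rewrite oppr_eq0. Qed.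

Lemma tail_prod_menelaus : (forall l, z l != 0) -> tail_prod 0 = 1 -> menelaus D z.
Proof.
move=> z0 prod1; exists curve_coef; split.
  exists (0, 0); last first.
    rewrite -bpoint0 curve_coef_bpoint ?curve_val_side_beg ?side_beg_first ?edge_seq_gt0 //.
    by rewrite prod1 oner_neq0.
  apply/allP => b /dvec_onto[l <-]; rewrite -bpoint_side_beg !dot_cross_rot -/(edge l).
  by rewrite {1}/cross /= !mul0r subrr side_support.
move=> l; rewrite -/(dvec l) side_factor_menelaus side_poly_curve_coef //; split.
  by rewrite scaler_eq0 negb_or tail_prod_neq0 // monic_neq0 // side_factor_monic.
by exists (tail_prod (side_end l)); rewrite ?tail_prod_neq0.
Qed.

Lemma tail_prod0_monomial :
  tail_prod 0 = (-1) ^+ (\sum_l latlen (dvec l)) * \prod_l z l ^+ latlen (dvec l).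
Proof.
rewrite /tail_prod (@big_edge_range _ _ _ predT (fun l => - z l)) ?edge_seq_gt0 //.
rewrite -prodrXr -big_split /=; apply: eq_bigr => l _.
by rewrite iter_mulr_1 -exprMn mulN1r.
Qed.

End Menelaus.

End BoundaryWalk.

Lemma binomial_hypersurface (R : realType) (n : nat) (S : ('I_n -> R[i]) -> Prop)
    (m : 'X_{1.. n}) (c : R[i]) :
  m != 0%MM -> c != 0 ->
  (forall z, (forall i, z i != 0) -> S z <-> \prod_i z i ^+ m i = c) ->
  torus_hypersurface n S.
Proof.
move=> m0 c0 S_eq; pose F : {mpoly R[i][n]} := 'X_[m] - c%:MP.
have Fm : F@_m = 1 by rewrite mcoeffB mcoeffX mcoeffC eqxx (negPf m0) mulr0 subr0.
have F0 : F@_0%MM = - c by rewrite mcoeffB mcoeffX mcoeffC eqxx (negPf m0) mulr1 sub0r.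
exists F; split; [|split].
- by apply: contra_neq (oner_neq0 R[i]) => F_eq0; rewrite -Fm F_eq0 mcoeff0.
- case=> lam [m' F_eq]; move: Fm F0; rewrite F_eq !mcoeffZ !mcoeffX.
  have [->|_] := eqVneq m' 0%MM.
    by rewrite eq_sym (negPf m0) mulr0 => /eqP; rewrite eq_sym oner_eq0.
  by rewrite mulr0 => _ /eqP; rewrite eq_sym oppr_eq0 (negPf c0).
- move=> z z0; rewrite S_eq // mevalB mevalX mevalC.
  by split=> [->|/eqP]; [rewrite subrr | rewrite subr_eq0 => /eqP].
Qed.

Theorem lemma2p2 (R : realType) (D : seq vec) :
  Delta_nonzero_vecs D -> Delta_balanced D -> Delta_nondegenerate D -> Delta_even_vecs D ->
  torus_hypersurface (size D) (fun z : 'I_(size D) -> R[i] => menelaus D z).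
Proof.
move=> D_nz D_bal D_ndeg _.
have [a aD _] := D_ndeg; pose x0 := Ordinal (etrans (index_mem a D) aD).
pose m : 'X_{1.. size D} := [multinom latlen (dvec l) | l < size D].
pose sg : R[i] := (-1) ^+ (\sum_(l < size D) latlen (dvec l)).
have sg2 : sg * sg = 1 by rewrite -expr2 sqrr_sign.
apply: (@binomial_hypersurface _ _ _ m sg).
- apply/negP => /eqP/mnmP/(_ x0); rewrite mnmE mnm0E => /eqP; apply/negP.
  by rewrite -lt0n latlen_gt0 // dvec_neq0.
- by rewrite signr_eq0.
move=> z z0; have zm : \prod_l z l ^+ m l = \prod_l z l ^+ latlen (dvec l).
  by apply: eq_bigr => l _; rewrite mnmE.
rewrite zm; split.
  move=> /(menelaus_tail_prod D_nz D_bal x0); rewrite tail_prod0_monomial -/sg => sgz.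
  by move: (congr1 (GRing.mul sg) sgz); rewrite mulrA sg2 mul1r mulr1.
move=> zsg; apply: (tail_prod_menelaus D_nz D_bal D_ndeg (x0 := x0) z0).
by rewrite tail_prod0_monomial -/sg zsg.
Qed.
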